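(* In the setting of the context, assume $G_{xy}^{[1]}=1$, $G_x/G_x^{[1]}\cong S_5$ and $G_x^{[1]}\cong S_4$. Then $G_x\cong S_5\times S_4$ and $G_e\cong S_4\wr C_2$.
   Context: $\mathcal{A}=(G_x,G_e,G_{xy})$ is a finite, primitive amalgam of degree $(5,2)$ (no nontrivial subgroup of $G_{xy}$ normal in both $G_x$ and $G_e$; $|G_x:G_{xy}|=5$, $|G_e:G_{xy}|=2$), $G=G_x*_{G_{xy}}G_e$ acts on the coset graph (5-valent tree) $\Gamma$, $x$ is the vertex with stabiliser $G_x$, $y$ the neighbour with $G_e$ the setwise stabiliser of $\{x,y\}$ and $G_x\cap G_y=G_{xy}$. $G_z^{[1]}$ is the pointwise stabiliser of $z$ and its neighbours, $G_{xy}^{[1]}=G_x^{[1]}\cap G_y^{[1]}$. *)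

From mathcomp Require Import all_boot all_fingroup.
Set Implicit Arguments. Unset Strict Implicit. Unset Printing Implicit Defensive.

Local Open Scope group_scope.

Definition amalgam_of_degree (gT : finGroupType) (Gx Ge Gxy : {group gT})
  (a b : nat) : Prop :=
  [/\ Gxy = Gx :&: Ge, #|Gx : Gxy| = a & #|Ge : Gxy| = b].

Definition primitive_amalgam (gT : finGroupType) (Gx Ge Gxy : {group gT}) : Prop :=
  forall K : {group gT}, K \subset Gxy -> K <| Gx -> K <| Ge -> K :=: 1.

(* G_z^{[1]}: kernel of the action of the vertex stabiliser Gz on the
   neighbours of z, which are the cosets of the edge stabiliser Gzw in Gz,
   i.e. the core of Gzw in Gz. *)
Definition vertex_kernel (gT : finGroupType) (Gz Gzw : {set gT}) : {set gT} :=
  gcore Gzw Gz.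

Definition Sym_n (n : nat) : {set 'S_n} := [set: 'S_n].

(* The wreath product S_4 wr C_2, realised (imprimitive permutation wreath
   product) as the stabiliser in S_8 of the block system {{0..3},{4..7}}. *)
Definition wr_block : {set 'I_8} := [set i : 'I_8 | i < 4].
Definition S4_wr_C2 : {set 'S_8} :=
  [set s : 'S_8 | (s @: wr_block == wr_block) || (s @: wr_block == ~: wr_block)].

From mathcomp Require Import all_boot all_fingroup.
From mathcomp Require Import center commutator.
Set Implicit Arguments. Unset Strict Implicit. Unset Printing Implicit Defensive.
Local Open Scope group_scope.

(* Let K = G_x^[1] = core of G_xy in G_x, so K ~ S_4 and K^t = G_y^[1].  Both are normal in
   G_xy and meet trivially, hence commute; as |G_xy| = 5! 4! / 5 = 24^2, G_xy = K x K^t.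
   Vertex: K C_{G_x}(K) is normal in G_x and contains G_xy, which has prime index and is not
   normal (its core K is smaller), so K C_{G_x}(K) = G_x; Z(S_4) = 1 makes the product direct,
   with C_{G_x}(K) ~ G_x/K ~ S_5.
   Edge: let S_j be the preimage in K of the stabiliser of the point j of S_4.  Conjugation
   by G_e permutes the eight subgroups S_j, S_j^t, preserving the blocks {S_j} and {S_j^t}
   (swapping them exactly outside G_xy), and only 1 normalises them all.  This embeds G_e
   into S_4 wr C_2, and the orders agree (2 * 24^2). *)

Section SymmetricGroup.

Variable T : finType.
Hypothesis T_gt2 : 2 < #|T|.

Lemma exists_neq2 (x y : T) : exists z, (z != x) && (z != y).
Proof.
case: (pickP [pred z | (z != x) && (z != y)]) => [z xyz | no_z]; first by exists z.
have : #|T| <= #|[set x; y]|.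
  rewrite -cardsT subset_leq_card //; apply/subsetP => z _.
  by have := no_z z; rewrite !inE /= => /negbT; rewrite negb_and !negbK.
by rewrite cards2 leqNgt (leq_ltn_trans _ T_gt2) // ltnS leq_b1.
Qed.

Lemma astab1_perm_inj : injective (fun x : T => 'C[x | 'P]).
Proof.
move=> x y eq_xy; apply/eqP; apply: contraT => neq_xy.
have [z /andP[zx zy]] := exists_neq2 x y.
have : tperm y z \in 'C[x | 'P] by apply/astab1P; rewrite /= apermE tpermD // eq_sym.
by rewrite eq_xy => /astab1P; rewrite /= apermE tpermL => /eqP; rewrite (negPf zy).
Qed.

Lemma astab1_perm_neq1 (x : T) : 'C[x | 'P] != 1.
Proof.
have [y /andP[yx _]] := exists_neq2 x x; have [z /andP[zx zy]] := exists_neq2 x y.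
apply/trivgPn; exists (tperm y z); first by apply/astab1P; rewrite /= apermE tpermD // eq_sym.
by apply: contra zy => /eqP/(congr1 (fun s : {perm T} => s y)); rewrite tpermL perm1 => ->.
Qed.

Lemma center_perm : 'Z([set: {perm T}]) = 1.
Proof.
apply/trivgP/subsetP => s /centerP[_ cs]; rewrite inE; apply/eqP/permP => x.
rewrite perm1; apply: astab1_perm_inj => /=.
rewrite -[s x]/('P%act x s) astab1_act; apply/normP.
by apply: (subsetP (cent_sub _)); apply/centP => u _; apply: cs; rewrite inE.
Qed.

End SymmetricGroup.

Lemma center_isog_perm (gT : finGroupType) (T : finType) (K : {group gT}) :
  2 < #|T| -> K \isog [set: {perm T}] -> 'Z(K) = 1.
Proof.
move=> T_gt2 /isogP[f injf imf]; apply/eqP.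
rewrite -(morphim_injm_eq1 injf) ?(subset_trans (center_sub K)) //.
by rewrite injm_center // imf center_perm.
Qed.

Section GroupFacts.

Variable gT : finGroupType.
Implicit Types (G H K L N : {group gT}) (g h t : gT).

Lemma gcoreJ H G t : gcore (H :^ t) (G :^ t) = gcore H G :^ t.
Proof.
apply/eqP; rewrite eqEsubset; apply/andP; split.
  rewrite -sub_conjgV; apply: gcore_max; first by rewrite sub_conjgV gcore_sub.
  by rewrite normJ -sub_conjg gcore_norm.
by apply: gcore_max; rewrite ?conjSg ?gcore_sub // normJ conjSg gcore_norm.
Qed.

Lemma index2_mulg_mem G H g h : H \subset G -> #|G : H| = 2 ->
  g \in G -> h \in G -> (g * h \in H) = ((g \in H) == (h \in H)).
Proof.
move=> sHG iHG Gg Gh; have [Hg|Hg] := boolP (g \in H); first by rewrite groupMl.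
have [Hh|Hh] := boolP (h \in H); first by rewrite groupMr // (negPf Hg).
have : g \in H :* h^-1 by rewrite (rcoset_index2 sHG) ?groupV // !inE ?groupV ?Hg ?Hh ?Gg ?Gh.
by rewrite mem_rcoset invgK.
Qed.

Lemma dprod_normal_TI L H K :
  H <| L -> K <| L -> H :&: K = 1 -> (#|H| * #|K|)%N = #|L| -> H \x K = L.
Proof.
move=> /andP[sHL nHL] /andP[sKL nKL] tiHK cardL.
have cHK : K \subset 'C(H).
  rewrite centsC; apply/commG1P/trivgP; rewrite -tiHK.
  by apply: commg_subI; rewrite subsetI subxx ?(subset_trans sHL nKL) ?(subset_trans sKL nHL).
by rewrite dprodE //; apply/eqP; rewrite eqEcard (mul_subG sHL sKL) TI_cardMg // cardL leqnn.
Qed.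

Lemma normal_sup_prime_index G H N :
  H \subset N -> N <| G -> prime #|G : H| -> ~~ (H <| G) -> N :=: G.
Proof.
move=> sHN /andP[sNG nNG] pr_iGH; apply: contraNeq => neqNG.
have [iGN|iNH] : #|G : N| = 1%N \/ #|N : H| = 1%N.
- move: pr_iGH; rewrite -(Lagrange_index sNG sHN) => /primeP[_].
  move/(_ _ (dvdn_mulr #|N : H| (dvdnn #|G : N|)))/orP => [/eqP-> | /eqP iGN]; [by left | right].
  by apply/eqP; rewrite -(eqn_pmul2l (indexg_gt0 G N)) muln1 -iGN.
- by rewrite (index1g sNG iGN) eqxx in neqNG.
by rewrite (index1g sHN iNH) /normal sNG nNG.
Qed.

Lemma dprod_subcent_prime_index G H K :
    K <| G -> H \subset K * 'C_G(K) -> prime #|G : H| -> ~~ (H <| G) -> 'Z(K) = 1 ->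
  K \x 'C_G(K) = G.
Proof.
move=> nsKG sH_KC pr_iGH not_nsHG trivZ.
have nsCG : 'C_G(K) <| G by have := subcent_normal G K; rewrite (setIidPl (normal_norm nsKG)).
have nKC : 'C_G(K) \subset 'N(K) := subset_trans (subsetIl _ _) (normal_norm nsKG).
rewrite -norm_joinEr // in sH_KC.
have defG := normal_sup_prime_index sH_KC (normalY nsKG nsCG) pr_iGH not_nsHG.
by rewrite dprodE ?subsetIr // -?norm_joinEr // setIA (setIidPl (normal_sub nsKG)).
Qed.

Lemma isog_setX_dprod (aT bT : finGroupType) (H K G : {group gT})
    (A : {group aT}) (B : {group bT}) :
  H \x K = G -> H \isog A -> K \isog B -> G \isog setX A B.
Proof.
move=> defG isoHA isoKB; apply: (isog_dprod defG (setX_dprod A B)).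
  apply: (isog_trans isoHA).
  by have := sub_isog (subsetT A) (injm_pairg1 _ bT); rewrite morphim_pairg1.
apply: (isog_trans isoKB).
by have := sub_isog (subsetT B) (injm_pair1g aT _); rewrite morphim_pair1g.
Qed.

Lemma isog_setX_gcore (aT bT : finGroupType) (G H L : {group gT})
    (A : {group aT}) (B : {group bT}) :
    H \subset G -> prime #|G : H| -> #|gcore H G| < #|H| ->
    gcore H G \x L = H -> 'Z(gcore H G) = 1 ->
    G / gcore H G \isog A -> gcore H G \isog B ->
  G \isog setX A B.
Proof.
move=> sHG pr_iGH ltKH dpH trivZ isoQ isoK; pose K := gcore_group H G.
have not_nsHG : ~~ (H <| G).
  apply: contraL ltKH => /normal_norm/(gcore_max (subxx H))/subset_leq_card.
  by rewrite -leqNgt.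
have sH_KC : H \subset K * 'C_G(K).
  have [_ defH cKL _] := dprodP dpH.
  by rewrite -{1}defH mulgS // subsetI cKL (subset_trans _ sHG) // -defH mulG_subr.
have dpG := dprod_subcent_prime_index (gcore_normal sHG) sH_KC pr_iGH not_nsHG trivZ.
have isoC : 'C_G(K) \isog A := isog_trans (sdprod_isog (dprodWsd dpG)) isoQ.
by apply: (isog_setX_dprod _ isoC isoK); rewrite dprodC.
Qed.

End GroupFacts.

Section PermSetStabiliser.

Variable T : finType.
Implicit Types (A B : {set T}) (s u : {perm T}).

Lemma perm_imsetE s A B : (forall x, (s x \in B) = (x \in A)) -> s @: A = B.
Proof.
move=> sAB; rewrite -[s]invgK im_permV; apply/setP => y.
by rewrite inE -sAB permKV.
Qed.

Lemma imset_permM s u A : (s * u) @: A = u @: (s @: A).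
Proof. by rewrite -imset_comp; apply: eq_imset => x; rewrite /= permM. Qed.

Lemma card_perm_setstab A : #|[set s : {perm T} | s @: A == A]| <= #|~: A|`! * #|A|`!.
Proof.
pose P B := [set s | perm_on B s].
have sub : [set s : {perm T} | s @: A == A] \subset
           [set x.1 * x.2 | x in setX (P (~: A)) (P A)].
  apply/subsetP => s; rewrite inE => /eqP sA.
  have nAs : s \in 'N(A | 'P).
    by rewrite !inE; apply/subsetP => x Ax; rewrite inE /= -sA; apply: imset_f.
  pose s1 := restr_perm A s.
  apply/imsetP; exists (s * s1^-1, s1); last by rewrite /= mulgKV.
  rewrite !inE /= restr_perm_on andbT; apply/subsetP => x; rewrite inE.
  apply: contraR; rewrite inE negbK => Ax.
  by rewrite permM -(restr_permE nAs Ax) permK.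
apply: leq_trans (subset_leq_card sub) _; apply: leq_trans (leq_imset_card _ _) _.
have cardP B : #|P B| = #|B|`! by rewrite cardsE card_perm.
by rewrite cardsX !cardP.
Qed.

Lemma card_perm_transporter A B :
  #|[set s : {perm T} | s @: A == B]| <= #|[set s : {perm T} | s @: A == A]|.
Proof.
have [-> | [s0]] := set_0Vmem [set s : {perm T} | s @: A == B]; first by rewrite cards0.
rewrite inE => /eqP s0A; rewrite -(card_imset _ (mulIg s0^-1)); apply: subset_leq_card.
apply/subsetP => _ /imsetP[s + ->]; rewrite inE => /eqP sA.
by rewrite inE imset_permM sA -s0A -imset_permM mulgV (eq_imset _ (@perm1 T)) imset_id.
Qed.

End PermSetStabiliser.

Lemma card_wr_block : #|wr_block| = 4.
Proof.
have -> : wr_block = [set lshift 4 j | j : 'I_4].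
  apply/setP => i; rewrite inE; apply/idP/imsetP => [lt_i4 | [j _ ->]]; last exact: (ltn_ord j).
  by exists (Ordinal lt_i4); last exact: val_inj.
by rewrite card_imset ?cardsT ?card_ord //; exact: lshift_inj.
Qed.

Lemma card_S4_wr_C2 : #|S4_wr_C2| <= 1152.
Proof.
have -> : S4_wr_C2 = [set s : 'S_8 | s @: wr_block == wr_block] :|:
                     [set s : 'S_8 | s @: wr_block == ~: wr_block].
  by apply/setP => s; rewrite !inE.
have stab := card_perm_setstab wr_block.
have card_wr_blockC : #|~: wr_block| = 4 by rewrite cardsCs setCK card_wr_block card_ord.
rewrite card_wr_blockC card_wr_block in stab.
apply: leq_trans (leq_card_setU _ _) _.
exact: leq_add stab (leq_trans (card_perm_transporter _ _) stab).
Qed.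

Lemma ltn_split m n (i : 'I_(m + n)) : (i < m) = is_inl (split i).
Proof. by rewrite -{1}(splitK i) ltn_unsplit. Qed.

Section ConjugationTransfer.

Variables (gT : finGroupType) (G : {group gT}) (T : finType) (X : T -> {set gT}).
Hypothesis X_inj : injective X.
Hypothesis X_conj : forall g x, g \in G -> exists y, X x :^ g = X y.

Definition conj_transfer (x : T) (g : gT) : T :=
  if g \in G then odflt x [pick y | X y == X x :^ g] else x.

Lemma conj_transferE x g : g \in G -> X (conj_transfer x g) = X x :^ g.
Proof.
move=> Gg; rewrite /conj_transfer Gg; case: pickP => [y /eqP //|no_y].
by have [y Xy] := X_conj x Gg; have := no_y y; rewrite /= Xy eqxx.
Qed.

Lemma conj_transfer_is_action : is_action G conj_transfer.
Proof.
split=> [g x y | x g h Gg Gh] /=.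
  case: (boolP (g \in G)) => [Gg|nGg]; last by rewrite /conj_transfer (negPf nGg).
  by move/(congr1 X); rewrite !conj_transferE // => /conjsg_inj/X_inj.
by apply: X_inj; rewrite !conj_transferE ?groupM // conjsgM.
Qed.

Definition conj_transfer_action := Action conj_transfer_is_action.

Lemma actperm_conj_transferE g x :
  g \in G -> X (actperm conj_transfer_action g x) = X x :^ g.
Proof. by move=> Gg; rewrite actpermE conj_transferE. Qed.

Lemma injm_actperm_conj_transfer :
  (forall g, g \in G -> (forall x, X x :^ g = X x) -> g = 1) ->
  'injm (actperm conj_transfer_action).
Proof.
move=> trivG; rewrite ker_actperm; apply/subsetP => g Cg.
have Gg := astab_dom Cg; rewrite inE; apply/eqP/trivG => // x.
by rewrite -conj_transferE //; move: (astab_act Cg (in_setT x)) => /= ->.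
Qed.

End ConjugationTransfer.

Section EdgeStabiliser.

Variables (gT : finGroupType) (Ge Gxy K : {group gT}) (t : gT).
Hypotheses (sGxyGe : Gxy \subset Ge) (iGe : #|Ge : Gxy| = 2) (tGe : t \in Ge :\: Gxy).
Hypothesis dpGxy : K \x K :^ t = Gxy.
Variable f : {morphism K >-> {perm 'I_4}}.
Hypotheses (injf : 'injm f) (imf : f @* K = [set: {perm 'I_4}]).

Let defGxy : K * K :^ t = Gxy := dprodW dpGxy.
Let cKKt : K :^ t \subset 'C(K). Proof. by case/dprodP: dpGxy. Qed.
Let tiKKt : K :&: K :^ t = 1. Proof. by case/dprodP: dpGxy. Qed.

Let S (j : 'I_4) : {set gT} := f @*^-1 'C[j | 'P].

Let card_I4 : 2 < #|'I_4|. Proof. by rewrite card_ord. Qed.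

Lemma stab_sub j : S j \subset K.
Proof. exact: morphpre_sub. Qed.

Lemma stabJ a j : a \in K -> S j :^ a = S (f a j).
Proof. by move=> Ka; rewrite /S -[f a j]/('P%act j (f a)) astab1_act morphpreJ. Qed.

Lemma stab_inj : injective S.
Proof.
move=> j k /(congr1 (fun R => f @* R)); rewrite !morphpreK ?imf ?subsetT //.
exact: astab1_perm_inj.
Qed.

Lemma stab_neq1 j : S j != 1.
Proof.
apply: contraNneq (astab1_perm_neq1 card_I4 j) => Sj1.
by have := @morphpreK _ _ _ f 'C[j | 'P]; rewrite imf subsetT -/(S j) Sj1 morphim1 => ->.
Qed.

Lemma stab_neq_stabJ j k : S j != S k :^ t.
Proof.
apply: contraNneq (stab_neq1 j) => eqS.
have : S j \subset K :&: K :^ t by rewrite subsetI stab_sub eqS conjSg stab_sub.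
by rewrite tiKKt subG1.
Qed.

Lemma stab_conjM a b j : a \in K -> b \in K :^ t -> S j :^ (a * b) = S (f a j).
Proof.
move=> Ka Ktb; rewrite conjsgM stabJ //; apply/normP.
exact: subsetP (cent_sub _) b (subsetP (centS (stab_sub _)) b (subsetP cKKt b Ktb)).
Qed.

Lemma stab_conjGxy h j : h \in Gxy -> exists k, S j :^ h = S k.
Proof.
by rewrite -defGxy => /mulsgP[a b Ka Ktb ->]; exists (f a j); apply: stab_conjM.
Qed.

Lemma stab_norm1 a : a \in K -> (forall j, S j :^ a = S j) -> a = 1.
Proof.
move=> Ka fixa; apply/eqP; rewrite -(morph_injm_eq1 injf Ka); apply/eqP/permP => j.
by rewrite perm1; apply: stab_inj; rewrite -stabJ.
Qed.

Let shift (b : bool) : gT := if b then 1 else t.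

Lemma shift_Ge b : shift b \in Ge.
Proof. by case: b; rewrite /shift ?group1 //; case/setDP: tGe. Qed.

Lemma shift_Gxy b : (shift b \in Gxy) = b.
Proof. by case: b; rewrite /shift ?group1 //; case/setDP: tGe => _ /negPf. Qed.

Let point (u : 'I_4 + 'I_4) : 'I_4 := match u with inl j | inr j => j end.

(* [inl j] and [inr j] index [S j <= K] and [S j :^ t <= K :^ t]: the two blocks of the
   wreath product are the point stabilisers in the two direct factors of [Gxy]. *)
Definition stabs (u : 'I_4 + 'I_4) : {set gT} := S (point u) :^ shift u.

Lemma stabs_inj : injective stabs.
Proof.
rewrite /stabs => -[] j [] k /=; rewrite /shift ?conjsg1.
- by move/stab_inj->.
- by move/eqP; rewrite (negPf (stab_neq_stabJ _ _)).
- by move/esym/eqP; rewrite (negPf (stab_neq_stabJ _ _)).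
- by move/conjsg_inj/stab_inj->.
Qed.

Lemma stabsJ g u : g \in Ge ->
  exists2 v, stabs u :^ g = stabs v & is_inl v = (is_inl u == (g \in Gxy)).
Proof.
move=> Geg; set b := is_inl u == (g \in Gxy).
have Gxy_h : shift u * g * (shift b)^-1 \in Gxy.
  by rewrite !(index2_mulg_mem sGxyGe iGe) ?groupM ?groupV ?shift_Ge ?shift_Gxy //= eqxx.
have [k Sk] := stab_conjGxy (point u) Gxy_h.
exists (if b then inl k else inr k); last by case: (b).
by rewrite /stabs -conjsgM -(mulgKV (shift b) (_ * g)) conjsgM Sk; case: (b).
Qed.

Let X (i : 'I_8) : {set gT} := stabs (@split 4 4 i).

Let X_inj : injective X.
Proof. exact: inj_comp stabs_inj (can_inj splitK). Qed.

Let X_conj g i : g \in Ge -> exists j, X i :^ g = X j.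
Proof.
by move=> Geg; have [v ev _] := stabsJ (@split 4 4 i) Geg; exists (unsplit v); rewrite /X unsplitK.
Qed.

Let phi := actperm (conj_transfer_action X_inj X_conj).

Lemma edge_actperm_block g i : g \in Ge -> (phi g i < 4) = ((i < 4) == (g \in Gxy)).
Proof.
move=> Geg; have [v ev inl_v] := stabsJ (@split 4 4 i) Geg.
have -> : phi g i = unsplit v.
  by apply: X_inj; rewrite actperm_conj_transferE // /X unsplitK.
by rewrite ltn_unsplit inl_v (@ltn_split 4 4 i).
Qed.

Lemma injm_edge_actperm : 'injm phi.
Proof.
apply: injm_actperm_conj_transfer => g Geg fixg.
have fixu u : stabs u :^ g = stabs u by have := fixg (unsplit u); rewrite /X unsplitK.
have Gxyg : g \in Gxy.
  have [v ev inl_v] := stabsJ (inl ord0) Geg.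
  by move: inl_v; rewrite (stabs_inj (etrans (esym ev) (fixu _))); case: (g \in Gxy).
move: Gxyg fixu; rewrite -defGxy => /mulsgP[a b Ka Ktb ->] fixu.
have a1 : a = 1.
  apply: stab_norm1 => // j; have := fixu (inl j).
  by rewrite /stabs /shift conjsg1 stab_conjM // -stabJ.
move: Ktb fixu; rewrite a1 mul1g mem_conjg => Kbt fixu.
suff : b ^ t^-1 = 1 by move/eqP; rewrite conjg_eq1 => /eqP.
apply: stab_norm1 => // j; have := fixu (inr j); rewrite /stabs /shift /=.
by rewrite conjgE invgK !conjsgM => ->; rewrite -conjsgM mulgV conjsg1.
Qed.

Lemma edge_actperm_im : phi @* Ge \subset S4_wr_C2.
Proof.
apply/subsetP => _ /morphimP[g _ Geg ->]; rewrite inE.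
case Gxyg : (g \in Gxy); apply/orP; [left | right]; apply/eqP; apply: perm_imsetE => i;
  by rewrite ?inE edge_actperm_block // Gxyg; case: (i < 4).
Qed.

Lemma edge_stabiliser_isog : Ge \isog S4_wr_C2.
Proof.
have cardK : #|K| = 24 by rewrite -(card_injm injf) // imf cardsT card_Sn.
have cardGe : #|Ge| = 1152.
  by rewrite -(Lagrange sGxyGe) iGe -(dprod_card dpGxy) cardJg cardK.
have im_phi : phi @* Ge = S4_wr_C2.
  apply/eqP; rewrite eqEcard edge_actperm_im (card_injm injm_edge_actperm) // cardGe.
  exact: card_S4_wr_C2.
by rewrite -im_phi; apply: sub_isog injm_edge_actperm.
Qed.

End EdgeStabiliser.

Theorem mainTheorem13 (gT : finGroupType) (Gx Ge Gxy : {group gT}) (t : gT) :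
  amalgam_of_degree Gx Ge Gxy 5 2 ->
  primitive_amalgam Gx Ge Gxy ->
  (* t swaps x and y, so G_y = Gx :^ t *)
  t \in Ge :\: Gxy ->
  (* G_xy^{[1]} = G_x^{[1]} :&: G_y^{[1]} = 1 *)
  vertex_kernel Gx Gxy :&: vertex_kernel (Gx :^ t) Gxy = 1 ->
  (Gx / vertex_kernel Gx Gxy) \isog Sym_n 5 ->
  vertex_kernel Gx Gxy \isog Sym_n 4 ->
  Gx \isog setX (Sym_n 5) (Sym_n 4) /\ Ge \isog S4_wr_C2.
Proof.
case=> defGxy iGx iGe _ tGe tiK isoQ isoK.
have sGxyGx : Gxy \subset Gx by rewrite defGxy subsetIl.
have sGxyGe : Gxy \subset Ge by rewrite defGxy subsetIr.
have Gxy_t : Gxy :^ t = Gxy.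
  by apply/normP; case/setDP: tGe => /(subsetP (normal_norm (index2_normal sGxyGe iGe))).
pose K := gcore_group Gxy Gx.
rewrite /vertex_kernel -{2}Gxy_t gcoreJ -/(gval K) in tiK.
have nsKGx : K <| Gx := gcore_normal sGxyGx.
have nsKGxy : K <| Gxy := normalS (gcore_sub _ _) sGxyGx nsKGx.
have nsKtGxy : K :^ t <| Gxy by rewrite -Gxy_t normalJ.
have cardK : #|K| = 24 by rewrite (card_isog isoK) cardsT card_Sn.
have cardGxy : #|Gxy| = 576.
  have := card_isog isoQ; rewrite card_quotient ?normal_norm // cardsT card_Sn => iK.
  apply/eqP; rewrite -(eqn_pmul2r (isT : 0 < 5)) -{1}iGx Lagrange //.
  by rewrite -(Lagrange (normal_sub nsKGx)) cardK iK.
have dpGxy : K \x K :^ t = Gxy.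
  by apply: dprod_normal_TI nsKGxy nsKtGxy tiK _; rewrite cardJg cardK cardGxy.
split; last first.
  have [f injf imf] := isogP isoK.
  exact: edge_stabiliser_isog sGxyGe iGe tGe dpGxy f injf imf.
apply: (isog_setX_gcore sGxyGx _ _ dpGxy (center_isog_perm _ isoK) isoQ isoK).
- by rewrite iGx.
- by rewrite -/(gval K) cardK cardGxy.
by rewrite card_ord.
Qed.
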